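(* Let $\kappa_l=1$ for all $l\ge1$, and for even $N\ge4$ let $\gamma_0(N)=\sum_{n=0}^{N-1}|f_N(k_n)|$ with $f_N(k)=2\sum_{l=1}^{N/2-1}\sin(kl)+1$ and $k_n=(2n+1)\pi/N$. Then there exist constants $0<c\le C$ and $N_0$ such that $c\,N\ln N\le\gamma_0(N)\le C\,N\ln N$ for all even $N\ge N_0$. Consequently $I_0(\Delta)=[\gamma_0(N)/2]^2T^2$ scales as $T^2N^2(\ln N)^2$ (super-Heisenberg scaling).
   Context: $T>0$ is the probe time; $I_0(\Delta)=[\gamma_0(N)/2]^2T^2$ is the optimally controlled quantum Fisher information for estimating the pairing strength $\Delta$ in the long-range Kitaev chain with decay law $\kappa_l$. *)

From Stdlib Require Import Reals.
Open Scope R_scope.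

Definition kappa (l : nat) : R := 1.

Fixpoint sum_l (k : R) (m : nat) : R :=
  match m with
  | O => 0
  | S m' => sum_l k m' + kappa m * sin (k * INR m)
  end.

Definition f_N (N : nat) (k : R) : R := 2 * sum_l k (Nat.div N 2 - 1) + 1.

Definition k_n (N n : nat) : R := (2 * INR n + 1) * PI / INR N.

Fixpoint sum_n (N : nat) (m : nat) : R :=
  match m with
  | O => 0
  | S m' => sum_n N m' + Rabs (f_N N (k_n N m'))
  end.

Definition gamma0 (N : nat) : R := sum_n N N.

Definition I0 (N : nat) (T : R) : R := (gamma0 N / 2) ^ 2 * T ^ 2.

(* Write N = 2K and theta_n = k_n / 2 = (2n+1) pi / (4K).  Summing
   2 sin(k/2) sin(kl) = cos(k(l - 1/2)) - cos(k(l + 1/2)) telescopes the sine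
   sum in f_N, and since cos((n + 1/2) pi) = 0 this gives the closed form
     f_N(k_n) = cot theta_n + 1 - sin((n + 1/2) pi),
   so |f_N(k_n)| differs from |cot theta_n| by at most 2.  The elementary
   bounds 1/x - 1 <= cot x (x <= pi/2) and |cot x| <= 3/x + 3/(pi - x),
   together with the symmetry theta_{N-1-n} = pi - theta_n and
   1/theta_n ~ K/(n+1), reduce gamma_0(N) to harmonic numbers, which are
   compared with logarithms through (b-a)/b <= ln b - ln a <= (b-a)/a.
   This yields  K/2 ln(K+1) - 3K <= gamma_0(2K) <= 6N + 4N ln N,  hence
   N ln N / 8 <= gamma_0(N) <= 10 N ln N once ln N >= 14; the bound on
   I_0 = (gamma_0/2)^2 T^2 follows by squaring. *)

From Stdlib Require Import Reals Lra Lia.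
Open Scope R_scope.

Lemma ln_le_compat x y : 0 < x -> x <= y -> ln x <= ln y.
Proof.
intros Hx Hxy. destruct (Rle_lt_or_eq_dec x y Hxy) as [Hlt | ->].
- left. now apply ln_increasing.
- lra.
Qed.

Lemma ln_le_sub1 y : 0 < y -> ln y <= y - 1.
Proof.
intros Hy. rewrite <- (ln_exp (y - 1)).
apply ln_le_compat; [exact Hy | pose proof (exp_ineq1_le (y - 1)); lra].
Qed.

Lemma ln_increment_bounds a b : 0 < a -> a <= b ->
  (b - a) / b <= ln b - ln a <= (b - a) / a.
Proof.
intros Ha Hab.
assert (Hdiv : forall u v, 0 < u -> 0 < v -> ln u - ln v = ln (u / v)).
{ intros u v Hu Hv. unfold Rdiv. rewrite ln_mult, ln_Rinv by
    (try apply Rinv_0_lt_compat; lra). ring. }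
pose proof (ln_le_sub1 (b / a) ltac:(apply Rdiv_lt_0_compat; lra)) as Hup.
pose proof (ln_le_sub1 (a / b) ltac:(apply Rdiv_lt_0_compat; lra)) as Hlo.
rewrite <- Hdiv in Hup, Hlo by lra.
replace (b / a - 1) with ((b - a) / a) in Hup by (field; lra).
replace (a / b - 1) with (- ((b - a) / b)) in Hlo by (field; lra).
lra.
Qed.

Lemma sin_ge_third a : 0 <= a -> a <= PI / 2 -> a / 3 <= sin a.
Proof.
intros Ha0 Ha1. pose proof PI_4.
pose proof (proj1 (sin_bound a 0 Ha0 ltac:(lra))) as Hcubic.
unfold sin_approx, sin_term in Hcubic. simpl in Hcubic.
assert (0 <= a * (4 - a * a)) by (apply Rmult_le_pos; nra).
lra.
Qed.

Lemma abs_cot_le x : 0 < x < PI -> Rabs (cos x / sin x) <= 3 / x + 3 / (PI - x).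
Proof.
intros Hx. assert (Hs : 0 < sin x) by (apply sin_gt_0; lra).
assert (Hcot : Rabs (cos x / sin x) <= / sin x).
{ unfold Rdiv. rewrite Rabs_mult, Rabs_inv, (Rabs_pos_eq (sin x)) by lra.
  pose proof (COS_bound x). assert (Rabs (cos x) <= 1) by (apply Rabs_le; lra).
  pose proof (Rinv_0_lt_compat _ Hs). nra. }
assert (0 < 3 / x) by (apply Rdiv_lt_0_compat; lra).
assert (0 < 3 / (PI - x)) by (apply Rdiv_lt_0_compat; lra).
assert (Hinv : forall y, 0 < y -> y / 3 <= sin x -> / sin x <= 3 / y).
{ intros y Hy Hsy. replace (3 / y) with (/ (y / 3)) by (field; lra).
  apply Rinv_le_contravar; lra. }
destruct (Rle_lt_dec x (PI / 2)).
- pose proof (Hinv x ltac:(lra) (sin_ge_third x ltac:(lra) ltac:(lra))). lra.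
- pose proof (sin_ge_third (PI - x) ltac:(lra) ltac:(lra)) as Hsin.
  rewrite sin_PI_x in Hsin. pose proof (Hinv (PI - x) ltac:(lra) Hsin). lra.
Qed.

(* Lower bound on cot on (0, pi/2], from sin x <= x and cos x >= 1 - x^2/2. *)
Lemma abs_cot_ge x : 0 < x <= PI / 2 -> / x - 1 <= Rabs (cos x / sin x).
Proof.
intros Hx. pose proof PI_4. assert (Hs : 0 < sin x) by (apply sin_gt_0; lra).
assert (Hc : 0 <= cos x) by (apply cos_ge_0; lra).
assert (Hsin : sin x <= x) by (left; apply sin_lt_x; lra).
assert (Hcos : 1 - x * x / 2 <= cos x).
{ replace (cos x) with (cos (2 * (x / 2))) by (f_equal; field). rewrite cos_2a_sin.
  assert (sin (x / 2) <= x / 2) by (left; apply sin_lt_x; lra).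
  assert (0 <= sin (x / 2)) by (apply sin_ge_0; lra). nra. }
unfold Rdiv. rewrite Rabs_pos_eq
  by (apply Rmult_le_pos; [lra | left; apply Rinv_0_lt_compat; lra]).
assert (/ x <= / sin x) by (apply Rinv_le_contravar; lra).
assert (cos x * / x <= cos x * / sin x) by (apply Rmult_le_compat_l; lra).
assert ((1 - x * x / 2) * / x <= cos x * / x).
{ apply Rmult_le_compat_r; [left; apply Rinv_0_lt_compat|]; lra. }
replace ((1 - x * x / 2) * / x) with (/ x - x / 2) in * by (field; lra).
lra.
Qed.

Fixpoint sumR (F : nat -> R) (m : nat) : R :=
  match m with O => 0 | S m' => sumR F m' + F m' end.

Lemma sumR_le F G m : (forall n, (n < m)%nat -> F n <= G n) -> sumR F m <= sumR G m.
Proof.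
induction m as [|m IH]; simpl; intros HFG; [lra|].
assert (F m <= G m) by (apply HFG; lia).
assert (sumR F m <= sumR G m) by (apply IH; intros; apply HFG; lia). lra.
Qed.

Lemma sumR_ext F G m : (forall n, (n < m)%nat -> F n = G n) -> sumR F m = sumR G m.
Proof.
induction m as [|m IH]; simpl; intros HFG; [reflexivity|].
rewrite (HFG m) by lia. rewrite IH; [reflexivity |]. intros n Hn. apply HFG. lia.
Qed.

Lemma sumR_plus F G m : sumR (fun n => F n + G n) m = sumR F m + sumR G m.
Proof. induction m as [|m IH]; simpl; [lra|]. rewrite IH. ring. Qed.

Lemma sumR_scal c F m : sumR (fun n => c * F n) m = c * sumR F m.
Proof. induction m as [|m IH]; simpl; [lra|]. rewrite IH. ring. Qed.

Lemma sumR_const c m : sumR (fun _ => c) m = INR m * c.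
Proof. induction m as [|m IH]; simpl sumR; [simpl; lra|]. rewrite IH, S_INR. ring. Qed.

Lemma sumR_prefix_le F j m : (forall n, 0 <= F n) -> (j <= m)%nat -> sumR F j <= sumR F m.
Proof. intros HF. induction 1; simpl; [lra|]. specialize (HF m). lra. Qed.

Lemma sumR_shift F m : sumR F (S m) = F 0%nat + sumR (fun n => F (S n)) m.
Proof.
induction m as [|m IH]; [simpl; lra|].
change (sumR F (S (S m))) with (sumR F (S m) + F (S m)).
rewrite IH. simpl. ring.
Qed.

Lemma sumR_rev m : forall F, sumR (fun n => F (m - S n)%nat) m = sumR F m.
Proof.
induction m as [|m IH]; intros F; [reflexivity|].
change (sumR (fun n => F (S m - S n)%nat) m + F (S m - S m)%nat = sumR F (S m)).
rewrite sumR_shift, Nat.sub_diag, <- (IH (fun n => F (S n))).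
rewrite (sumR_ext (fun n => F (m - n)%nat) (fun n => F (S (m - S n)))); [ring|].
intros n Hn. f_equal. lia.
Qed.

Lemma gamma0_sumR N : gamma0 N = sumR (fun n => Rabs (f_N N (k_n N n))) N.
Proof.
unfold gamma0.
assert (Hpartial : forall m, sum_n N m = sumR (fun n => Rabs (f_N N (k_n N n))) m).
{ induction m as [|m IH]; simpl; [reflexivity | now rewrite IH]. }
apply Hpartial.
Qed.

Definition Harm (m : nat) : R := sumR (fun j => / (INR j + 1)) m.

Lemma Harm_ge_ln m : ln (INR m + 1) <= Harm m.
Proof.
induction m as [|m IH].
- unfold Harm; simpl. rewrite Rplus_0_l, ln_1. lra.
- unfold Harm in *. simpl sumR. rewrite S_INR. pose proof (pos_INR m).
  pose proof (ln_increment_bounds (INR m + 1) (INR m + 1 + 1) ltac:(lra) ltac:(lra)).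
  replace ((INR m + 1 + 1 - (INR m + 1)) / (INR m + 1)) with (/ (INR m + 1)) in *
    by (field; lra).
  lra.
Qed.

Lemma Harm_le_ln m : (1 <= m)%nat -> Harm m <= 1 + ln (INR m).
Proof.
induction 1 as [|m Hm IH].
- unfold Harm; simpl. rewrite ln_1. lra.
- unfold Harm in *. simpl sumR. rewrite S_INR.
  assert (1 <= INR m) by (apply (le_INR 1); exact Hm).
  pose proof (ln_increment_bounds (INR m) (INR m + 1) ltac:(lra) ltac:(lra)).
  replace ((INR m + 1 - INR m) / (INR m + 1)) with (/ (INR m + 1)) in * by (field; lra).
  lra.
Qed.

Lemma two_sin_mul_sin c u : 2 * sin c * sin u = cos (u - c) - cos (u + c).
Proof. rewrite cos_minus, cos_plus. ring. Qed.

Lemma sum_l_telescope k m : 2 * sin (k / 2) * sum_l k m = cos (k / 2) - cos (k * INR m + k / 2).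
Proof.
induction m as [|m IH].
- simpl. replace (k * 0 + k / 2) with (k / 2) by ring. ring.
- change (sum_l k (S m)) with (sum_l k m + kappa (S m) * sin (k * INR (S m))).
  unfold kappa. rewrite S_INR.
  transitivity (2 * sin (k / 2) * sum_l k m + 2 * sin (k / 2) * sin (k * (INR m + 1)));
    [ring|].
  rewrite IH, two_sin_mul_sin.
  replace (k * (INR m + 1) - k / 2) with (k * INR m + k / 2) by field.
  ring.
Qed.

Definition node_angle (K n : nat) : R := (2 * INR n + 1) * PI / (4 * INR K).

Lemma k_n_double K n : (1 <= K)%nat -> k_n (2 * K) n = 2 * node_angle K n.
Proof.
intros HK. assert (1 <= INR K) by (apply (le_INR 1); exact HK).
unfold k_n, node_angle. rewrite mult_INR. simpl INR. field. lra.
Qed.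

Lemma node_angle_range K n : (n < 2 * K)%nat ->
  0 < node_angle K n < PI /\ ((n < K)%nat -> node_angle K n <= PI / 2).
Proof.
intros Hn. pose proof PI_RGT_0. pose proof (pos_INR n).
assert (HK : 1 <= INR K) by (apply (le_INR 1); lia).
assert (Hn2 : INR n + 1 <= 2 * INR K).
{ rewrite <- S_INR. replace 2 with (INR 2) by (simpl; lra).
  rewrite <- mult_INR. apply le_INR. lia. }
set (u := PI / (4 * INR K)).
assert (Hu : 0 < u) by (apply Rdiv_lt_0_compat; lra).
assert (HPI : PI = 4 * INR K * u) by (unfold u; field; lra).
assert (Hth : node_angle K n = (2 * INR n + 1) * u) by (unfold node_angle, u; field; lra).
rewrite Hth. repeat split; [nra | nra |].
intros HnK. assert (INR n + 1 <= INR K) by (rewrite <- S_INR; apply le_INR; lia). nra.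
Qed.

Lemma node_angle_reflect K n : (n < 2 * K)%nat ->
  node_angle K (2 * K - S n) = PI - node_angle K n.
Proof.
intros Hn. assert (1 <= INR K) by (apply (le_INR 1); lia).
unfold node_angle. rewrite minus_INR, mult_INR by lia. rewrite (S_INR n).
change (INR 2) with (1 + 1). field. lra.
Qed.

Lemma f_N_at_node K n : (n < 2 * K)%nat ->
  f_N (2 * K) (k_n (2 * K) n)
  = cos (node_angle K n) / sin (node_angle K n) + (1 - sin (INR n * PI + PI / 2)).
Proof.
intros Hn. assert (HK : (1 <= K)%nat) by lia.
destruct (node_angle_range K n Hn) as [[Hpos HltPI] _].
assert (Hs : 0 < sin (node_angle K n)) by (apply sin_gt_0; lra).
unfold f_N. replace (Nat.div (2 * K) 2) with K by (rewrite Nat.mul_comm, Nat.div_mul; lia).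
rewrite k_n_double by exact HK.
set (x := node_angle K n) in *. set (A := INR n * PI + PI / 2).
pose proof (sum_l_telescope (2 * x) (K - 1)) as Htel.
replace (2 * x / 2) with x in Htel by field.
replace (2 * x * INR (K - 1) + x) with (A - x) in Htel.
2: { unfold A, x, node_angle. rewrite minus_INR by exact HK. simpl INR.
     assert (1 <= INR K) by (apply (le_INR 1); exact HK). field. lra. }
assert (HcosA : cos A = 0).
{ apply cos_eq_0_1. exists (Z.of_nat n). unfold A. now rewrite <- INR_IZR_INZ. }
rewrite cos_minus, HcosA in Htel.
apply Rmult_eq_reg_r with (sin x); [|lra].
replace ((cos x / sin x + (1 - sin A)) * sin x) with (cos x + (1 - sin A) * sin x)
  by (field; lra).
lra.
Qed.

Lemma abs_f_N_at_node K n : (n < 2 * K)%nat ->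
  let c := Rabs (cos (node_angle K n) / sin (node_angle K n)) in
  c - 2 <= Rabs (f_N (2 * K) (k_n (2 * K) n)) <= c + 2.
Proof.
intros Hn c. rewrite f_N_at_node by exact Hn.
set (b := 1 - sin (INR n * PI + PI / 2)).
assert (Hb : Rabs b <= 2).
{ pose proof (SIN_bound (INR n * PI + PI / 2)). unfold b.
  rewrite Rabs_pos_eq by lra. lra. }
pose proof (Rabs_triang (cos (node_angle K n) / sin (node_angle K n)) b).
pose proof (Rabs_triang_inv (cos (node_angle K n) / sin (node_angle K n)) (- b)).
rewrite Rabs_Ropp in *.
replace (cos (node_angle K n) / sin (node_angle K n) - - b)
  with (cos (node_angle K n) / sin (node_angle K n) + b) in * by ring.
unfold c. lra.
Qed.

(* 1/theta_n is comparable to K/(n+1), using 3 < pi <= 4. *)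
Lemma inv_node_angle_bounds K n : (1 <= K)%nat ->
  INR K / 2 / (INR n + 1) <= / node_angle K n <= 4 / 3 * INR K / (INR n + 1).
Proof.
intros HK. assert (1 <= INR K) by (apply (le_INR 1); exact HK).
pose proof (pos_INR n). pose proof PI_4. pose proof PI2_3_2.
unfold node_angle.
replace (/ ((2 * INR n + 1) * PI / (4 * INR K))) with
  (4 * INR K / ((2 * INR n + 1) * PI)) by (field; nra).
split.
- replace (INR K / 2 / (INR n + 1)) with (4 * INR K / (8 * (INR n + 1))) by (field; lra).
  unfold Rdiv. apply Rmult_le_compat_l; [lra|]. apply Rinv_le_contravar; nra.
- replace (4 / 3 * INR K / (INR n + 1)) with (4 * INR K / (3 * (INR n + 1))) by (field; lra).
  unfold Rdiv. apply Rmult_le_compat_l; [lra|]. apply Rinv_le_contravar; nra.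
Qed.

(* Upper bound: |f_N(k_n)| <= 3/theta_n + 3/(pi - theta_n) + 2, the two singular
   parts contribute equally by symmetry, and 3/theta_n <= 2N/(n+1). *)
Lemma gamma0_le K : (1 <= K)%nat ->
  gamma0 (2 * K) <= 6 * INR (2 * K) + 4 * INR (2 * K) * ln (INR (2 * K)).
Proof.
intros HK. set (N := (2 * K)%nat).
assert (HN : INR N = 2 * INR K) by (unfold N; rewrite mult_INR; simpl; ring).
assert (Hterm : sumR (fun n => Rabs (f_N N (k_n N n))) N
                <= sumR (fun n => 3 / node_angle K n + 3 / (PI - node_angle K n) + 2) N).
{ apply sumR_le. intros n Hn.
  pose proof (abs_cot_le (node_angle K n) (proj1 (node_angle_range K n Hn))).
  pose proof (abs_f_N_at_node K n Hn) as Hf. cbv zeta in Hf. fold N in Hf. lra. }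
assert (Hreflect : sumR (fun n => 3 / (PI - node_angle K n)) N = sumR (fun n => 3 / node_angle K n) N).
{ rewrite <- (sumR_rev N (fun n => 3 / node_angle K n)). apply sumR_ext. intros n Hn.
  now rewrite node_angle_reflect. }
assert (Hharm : sumR (fun n => 3 / node_angle K n) N <= 2 * INR N * Harm N).
{ unfold Harm. rewrite <- sumR_scal. apply sumR_le. intros n _.
  pose proof (inv_node_angle_bounds K n HK). pose proof (pos_INR n).
  unfold Rdiv in *. rewrite HN. lra. }
pose proof (Harm_le_ln N ltac:(unfold N; lia)).
assert (0 <= INR N) by apply pos_INR.
assert (2 * INR N * Harm N <= 2 * INR N * (1 + ln (INR N))) by (apply Rmult_le_compat_l; lra).
rewrite gamma0_sumR. fold N.
rewrite !sumR_plus, sumR_const, Hreflect in Hterm. lra.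
Qed.

(* Lower bound from the first K nodes only, where theta_n <= pi/2 and
   |f_N(k_n)| >= 1/theta_n - 3 >= (K/2)/(n+1) - 3. *)
Lemma gamma0_ge K : (1 <= K)%nat ->
  INR K / 2 * ln (INR K + 1) - 3 * INR K <= gamma0 (2 * K).
Proof.
intros HK. assert (1 <= INR K) by (apply (le_INR 1); exact HK).
assert (Hfirst : sumR (fun n => INR K / 2 * / (INR n + 1) + -3) K
                 <= sumR (fun n => Rabs (f_N (2 * K) (k_n (2 * K) n))) K).
{ apply sumR_le. intros n Hn.
  destruct (node_angle_range K n ltac:(lia)) as [Hrange Hhalf].
  pose proof (abs_cot_ge (node_angle K n) (conj (proj1 Hrange) (Hhalf Hn))).
  pose proof (abs_f_N_at_node K n ltac:(lia)) as Hf. cbv zeta in Hf.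
  pose proof (inv_node_angle_bounds K n HK). unfold Rdiv in *. lra. }
rewrite sumR_plus, sumR_scal, sumR_const in Hfirst. fold (Harm K) in Hfirst.
pose proof (Harm_ge_ln K).
assert (INR K / 2 * ln (INR K + 1) <= INR K / 2 * Harm K) by (apply Rmult_le_compat_l; lra).
rewrite gamma0_sumR.
pose proof (sumR_prefix_le (fun n => Rabs (f_N (2 * K) (k_n (2 * K) n))) K (2 * K)
              (fun n => Rabs_pos _) ltac:(lia)).
lra.
Qed.

Lemma gamma0_Theta K : (1 <= K)%nat -> 14 <= ln (INR (2 * K)) ->
  1 / 8 * INR (2 * K) * ln (INR (2 * K)) <= gamma0 (2 * K) <=
  10 * INR (2 * K) * ln (INR (2 * K)).
Proof.
intros HK HL. assert (1 <= INR K) by (apply (le_INR 1); exact HK).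
assert (HN : INR (2 * K) = 2 * INR K) by (rewrite mult_INR; simpl; ring).
pose proof (gamma0_le K HK). pose proof (gamma0_ge K HK).
set (L := ln (INR (2 * K))) in *. rewrite HN in *.
assert (HlnK : L <= 1 + ln (INR K + 1)).
{ assert (ln (INR K) <= ln (INR K + 1)) by (apply ln_le_compat; lra).
  assert (L = ln 2 + ln (INR K)) by (unfold L; rewrite HN; apply ln_mult; lra).
  pose proof (ln_le_sub1 2 ltac:(lra)). lra. }
assert (INR K / 2 * (L - 1) <= INR K / 2 * ln (INR K + 1)) by (apply Rmult_le_compat_l; lra).
split; nra.
Qed.

(* ln N >= 14 as soon as N >= 3^14, since ln 3 >= 1. *)
Lemma ln_ge_14 N : (3 ^ 14 <= N)%nat -> 14 <= ln (INR N).
Proof.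
intros HN. apply le_INR in HN. rewrite pow_INR in HN.
replace (INR 3) with 3 in HN by (simpl; lra).
assert (H3 : 0 < 3 ^ 14) by (apply pow_lt; lra).
pose proof (ln_le_compat _ _ H3 HN) as Hln. rewrite ln_pow in Hln by lra.
assert (Hln3 : ln (exp 1) <= ln 3) by (apply ln_le_compat; [apply exp_pos | exact exp_le_3]).
rewrite ln_exp in Hln3. replace (INR 14) with 14 in Hln by (simpl; lra).
lra.
Qed.

Lemma I0_bounds N T c C L : 0 < T -> 0 <= c * INR N * L ->
  c * INR N * L <= gamma0 N <= C * INR N * L ->
  (c / 2) ^ 2 * (T ^ 2 * INR N ^ 2 * L ^ 2) <= I0 N T <=
  (C / 2) ^ 2 * (T ^ 2 * INR N ^ 2 * L ^ 2).
Proof.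
intros HT Hlo [Hgl Hgu]. unfold I0.
assert (HT2 : 0 <= T ^ 2) by (apply pow_le; lra).
replace ((c / 2) ^ 2 * (T ^ 2 * INR N ^ 2 * L ^ 2)) with ((c * INR N * L / 2) ^ 2 * T ^ 2) by field.
replace ((C / 2) ^ 2 * (T ^ 2 * INR N ^ 2 * L ^ 2)) with ((C * INR N * L / 2) ^ 2 * T ^ 2) by field.
split; apply Rmult_le_compat_r; try exact HT2; apply pow_incr; lra.
Qed.

Theorem mainTheorem6 :
  exists (c C : R) (N0 : nat),
    0 < c /\ c <= C /\
    (forall N : nat, (4 <= N)%nat -> Nat.Even N -> (N0 <= N)%nat ->
       c * INR N * ln (INR N) <= gamma0 N <= C * INR N * ln (INR N) /\
       (forall T : R, 0 < T ->
          (c / 2) ^ 2 * (T ^ 2 * INR N ^ 2 * ln (INR N) ^ 2) <= I0 N T <=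
          (C / 2) ^ 2 * (T ^ 2 * INR N ^ 2 * ln (INR N) ^ 2))).
Proof.
exists (1 / 8), 10, (3 ^ 14)%nat.
split; [lra | split; [lra |]].
intros N HN4 [K ->] Hlarge.
pose proof (ln_ge_14 _ Hlarge) as HL.
assert (HK : (1 <= K)%nat) by lia.
pose proof (gamma0_Theta K HK HL) as Hgamma.
split; [exact Hgamma |].
intros T HT. apply I0_bounds; [exact HT | | exact Hgamma].
assert (0 < INR (2 * K)) by (apply lt_0_INR; lia). nra.
Qed.
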